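(* $X=\{x\in\mathrm{Cay}:\tilde\upsilon(\gamma(x))=\mathrm{sort}(x)\}$.
   Context: $\mathrm{Cay}$ is the set of Cayley permutations (words of positive integers in which every integer from $1$ to the maximum occurs); $\mathrm{sort}(x)$ is the weakly increasing rearrangement of $x$. For $x$ of length $n$, $\gamma(x)$ is the permutation of $[n]$ obtained by sorting the pairs $(x(i),i)$ increasingly by first coordinate, ties by decreasing second coordinate, and reading off the second coordinates. For a permutation $\pi$ of $[n]$ and $i\in[n]$, let $J(i)=0$ if $\pi(i)=1$ and otherwise $J(i)$ is the index with $\pi(J(i))=\pi(i)-1$. The site before $\pi(1)$ is $\eta$-active; the site after $\pi(i)$ is $\eta$-active iff $J(i)<i$, or $i<n$ and $\pi(i)<\pi(i+1)$. $\tilde\upsilon(\pi)$ is the word of length $n$ whose $j$-th letter is the number of $\eta$-active sites to the left of $\pi(j)$. $\eta(\pi)$ is the word with $\eta(\pi)(\pi(j))=\tilde\upsilon(\pi)(j)$ for all $j$, and $X=\{\eta(\pi):\pi\text{ a permutation}\}$. *)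

(* Words are seq nat; positions and values are 1-based:
   the i-th letter (1 <= i <= size w) is nth 0 w i.-1. *)
From mathcomp Require Import all_boot.
Set Implicit Arguments. Unset Strict Implicit. Unset Printing Implicit Defensive.

Definition at1 (w : seq nat) (i : nat) : nat := nth 0 w i.-1.

Definition wmax (w : seq nat) : nat := foldr maxn 0 w.

Definition is_cay (x : seq nat) : bool :=
  all (fun a => 0 < a) x && all (fun k => k \in x) (iota 1 (wmax x)).

Definition is_perm (p : seq nat) : bool := perm_eq p (iota 1 (size p)).

Definition sortw (x : seq nat) : seq nat := sort leq x.

Definition gamma_rel (x : seq nat) (i j : nat) : bool :=
  (at1 x i < at1 x j) || ((at1 x i == at1 x j) && (j <= i)).
Definition gamma (x : seq nat) : seq nat := sort (gamma_rel x) (iota 1 (size x)).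

Definition Jidx (p : seq nat) (i : nat) : nat :=
  if at1 p i == 1 then 0 else (index (at1 p i).-1 p).+1.

(* site k (0 <= k <= n) is the site right after pi(k); site 0 is before pi(1) *)
Definition eta_active (p : seq nat) (k : nat) : bool :=
  (k == 0) || (Jidx p k < k) || ((k < size p) && (at1 p k < at1 p k.+1)).

(* upsilon-tilde: j-th letter = number of active sites to the left of pi(j),
   i.e. active sites among 0, ..., j-1 *)
Definition upsilon_t (p : seq nat) : seq nat :=
  [seq count (eta_active p) (iota 0 j) | j <- iota 1 (size p)].

(* eta(pi)(pi(j)) = upsilon-tilde(pi)(j) *)
Definition eta (p : seq nat) : seq nat :=
  [seq at1 (upsilon_t p) (index v p).+1 | v <- iota 1 (size p)].

Definition inX (x : seq nat) : Prop := exists p, is_perm p /\ eta p = x.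

From mathcomp Require Import all_boot.
From mathcomp Require Import zify.
Set Implicit Arguments. Unset Strict Implicit. Unset Printing Implicit Defensive.

(* For a permutation p put x = eta p, so that x(p(j)) = upsilon_t(p)(j).  The
   word upsilon_t(p) starts at 1, is weakly increasing with steps 0 or 1, and
   steps up across every active site; a non-active site after p(j), j < n,
   forces p(j) > p(j+1).  So p lists the positions of x exactly in the order
   used to define gamma(x): gamma(x) = p, hence upsilon_t(gamma x) = x o p =
   sort x, and x, a rearrangement of upsilon_t(p), is a Cayley permutation.
   Conversely upsilon_t(gamma x) = sort x = x o gamma(x) says eta(gamma x) = x. *)

Section Gamma.
Variable x : seq nat.

Lemma gamma_rel_trans : transitive (gamma_rel x).
Proof.
move=> j i k; rewrite /gamma_rel.
move=> /orP[h1|/andP[/eqP e1 h1]] /orP[h2|/andP[/eqP e2 h2]]; apply/orP.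
- by left; lia.
- by left; lia.
- by left; lia.
- by right; apply/andP; split; [apply/eqP; lia | lia].
Qed.

Lemma gamma_rel_anti : antisymmetric (gamma_rel x).
Proof.
move=> i j; rewrite /gamma_rel.
by move=> /andP[/orP[h1|/andP[/eqP e1 h1]] /orP[h2|/andP[/eqP e2 h2]]]; lia.
Qed.

Lemma gamma_rel_total : total (gamma_rel x).
Proof.
move=> i j; rewrite /gamma_rel.
by case: (ltngtP (at1 x i) (at1 x j)) => //= _; rewrite leq_total.
Qed.

Lemma map_at1_iota : map (at1 x) (iota 1 (size x)) = x.
Proof.
rewrite (iotaDl 1 0) -map_comp -[RHS](mkseq_nth 0).
by apply: eq_map => i.
Qed.

Lemma size_gamma : size (gamma x) = size x.
Proof. by rewrite /gamma size_sort size_iota. Qed.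

Lemma perm_gamma : perm_eq (gamma x) (iota 1 (size x)).
Proof. by rewrite /gamma perm_sort. Qed.

Lemma gamma_sorted q :
  perm_eq q (iota 1 (size x)) -> sorted (gamma_rel x) q -> gamma x = q.
Proof.
move=> q_perm q_sorted.
rewrite /gamma -(sorted_sort gamma_rel_trans q_sorted).
apply/(perm_sortP gamma_rel_total gamma_rel_trans gamma_rel_anti).
by rewrite perm_sym.
Qed.

Lemma map_at1_gamma : map (at1 x) (gamma x) = sortw x.
Proof.
have sorted_map_gamma : sorted leq (map (at1 x) (gamma x)).
  rewrite sorted_map; apply: sub_sorted (sort_sorted gamma_rel_total _).
  by move=> i j /orP[/ltnW | /andP[/eqP /= -> _]].
have perm_map_gamma : perm_eq (map (at1 x) (gamma x)) x.
  by rewrite -[X in perm_eq _ X]map_at1_iota; exact: perm_map perm_gamma.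
rewrite /sortw -(sorted_sort leq_trans sorted_map_gamma).
exact/(perm_sortP leq_total leq_trans anti_leq).
Qed.

End Gamma.

Lemma at1_map_iota (f : nat -> nat) n v :
  0 < v <= n -> at1 [seq f i | i <- iota 1 n] v = f v.
Proof.
move=> v_range; rewrite /at1 (nth_map 0) ?size_iota; last lia.
by rewrite nth_iota; [congr f | ]; lia.
Qed.

Lemma eta_eq_map p x : is_perm p -> size x = size p ->
  eta p = x <-> upsilon_t p = map (at1 x) p.
Proof.
rewrite /is_perm => p_perm size_x.
have mem_p v : (v \in p) = (0 < v <= size p).
  by rewrite (perm_mem p_perm) mem_iota; lia.
split=> [<- | ups_p].
  apply: (@eq_from_nth _ 0); first by rewrite size_map /upsilon_t size_map size_iota.
  move=> j; rewrite /upsilon_t size_map size_iota => j_lt.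
  have p_j : nth 0 p j \in p by rewrite mem_nth.
  rewrite -/(upsilon_t p) (nth_map 0) // /eta at1_map_iota -?mem_p //.
  by rewrite index_uniq // (perm_uniq p_perm) iota_uniq.
rewrite -[RHS]map_at1_iota size_x /eta ups_p.
apply/eq_in_map => v; rewrite mem_iota add1n ltnS => v_range.
have p_v : v \in p by rewrite mem_p.
by rewrite /at1 /= (nth_map 0) ?index_mem // nth_index.
Qed.

Definition nactive (p : seq nat) (j : nat) : nat := count (eta_active p) (iota 0 j).

Lemma nactiveS p j : nactive p j.+1 = nactive p j + eta_active p j.
Proof. by rewrite /nactive -addn1 iotaD count_cat /= addn0. Qed.

Lemma nth_upsilon_t p j : j < size p -> nth 0 (upsilon_t p) j = nactive p j.+1.
Proof. by move=> j_lt; rewrite /upsilon_t (nth_map 0) ?size_iota // nth_iota. Qed.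

Lemma inactive_descent p k :
  k < size p -> ~~ eta_active p k -> at1 p k.+1 <= at1 p k.
Proof. by rewrite /eta_active => -> /norP[_]; rewrite /= -leqNgt. Qed.

Lemma sorted_gamma_rel_upsilon p x :
  upsilon_t p = map (at1 x) p -> sorted (gamma_rel x) p.
Proof.
move=> ups_p.
have x_p j : j < size p -> at1 x (nth 0 p j) = nactive p j.+1.
  by move=> j_lt; rewrite -nth_upsilon_t // ups_p (nth_map 0).
apply/(sortedP 0) => j j_lt; have j_lt' := ltnW j_lt.
rewrite /gamma_rel !x_p // (nactiveS p j.+1); case: (boolP (eta_active p j.+1)) => [_ | inactive].
  by rewrite addn1 ltnSn.
by rewrite addn0 ltnn eqxx (inactive_descent j_lt inactive).
Qed.

Lemma wmax_perm s t : perm_eq s t -> wmax s = wmax t.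
Proof. by move=> st; rewrite /wmax !foldrE (perm_big _ st). Qed.

Lemma has_geq_wmax s k : 0 < k <= wmax s -> has (leq k) s.
Proof.
elim: s => [|a s IHs] /=; first lia.
by case: (leqP k a) => // a_lt k_range; apply: IHs; lia.
Qed.

Lemma is_cay_perm x y : perm_eq x y -> is_cay x = is_cay y.
Proof.
move=> xy; rewrite /is_cay (wmax_perm xy) (eq_all_r (perm_mem xy)).
by congr andb; apply: eq_all => k; rewrite (perm_mem xy).
Qed.

Section UnitSteps.
Variable f : nat -> nat.
Hypothesis f_nondecr : forall j, f j <= f j.+1.
Hypothesis f_unit_step : forall j, f j.+1 <= (f j).+1.

Lemma unit_steps_ivt a b k :
  a <= b -> f a <= k <= f b -> exists2 j, a <= j <= b & f j = k.
Proof.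
elim: b => [|b IHb]; first by rewrite leqn0 => /eqP <- k_range; exists a; lia.
rewrite leq_eqVlt => /orP[/eqP <- | a_le_b] k_range; first by exists a; lia.
have:= f_unit_step b; case: (leqP k (f b)) => [k_le | k_gt] step.
  by have [|j j_range <-] := IHb a_le_b; [lia | exists j; lia].
by exists b.+1; lia.
Qed.

Lemma is_cay_unit_steps n : f 1 = 1 -> is_cay [seq f j | j <- iota 1 n].
Proof.
move=> f1; have f_mono := homo_leq leqnn leq_trans f_nondecr.
apply/andP; split.
  apply/allP => y /mapP[j]; rewrite mem_iota => /andP[j_ge1 _] ->.
  by rewrite -f1 f_mono.
apply/allP => k; rewrite mem_iota add1n ltnS => k_range.
have /hasP[y /mapP[i]] := has_geq_wmax k_range.
rewrite mem_iota => /andP[i_ge1 i_lt] -> k_le.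
have [|j j_range <-] := unit_steps_ivt i_ge1 (k := k); first lia.
by rewrite map_f // mem_iota; lia.
Qed.

End UnitSteps.

Lemma is_cay_upsilon p : is_cay (upsilon_t p).
Proof.
apply: (@is_cay_unit_steps (nactive p)) => // j; rewrite nactiveS.
  exact: leq_addr.
by rewrite -addn1 leq_add2l leq_b1.
Qed.

Theorem lemma7p4 (x : seq nat) :
  inX x <-> (is_cay x /\ upsilon_t (gamma x) = sortw x).
Proof.
split=> [[p [p_perm eta_p]] | [_ ups_gamma]]; last first.
  have gamma_perm : is_perm (gamma x) by rewrite /is_perm size_gamma perm_gamma.
  exists (gamma x); split => //.
  by apply/eta_eq_map; rewrite ?size_gamma ?map_at1_gamma.
have size_x : size x = size p by rewrite -eta_p /eta size_map size_iota.
have ups_p : upsilon_t p = map (at1 x) p by apply/eta_eq_map.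
have gamma_x : gamma x = p.
  by apply: gamma_sorted; [rewrite size_x | exact: sorted_gamma_rel_upsilon].
split; last by rewrite gamma_x ups_p -{1}gamma_x map_at1_gamma.
rewrite (@is_cay_perm x (upsilon_t p)) ?is_cay_upsilon // ups_p.
rewrite -[X in perm_eq X]map_at1_iota size_x.
by apply: perm_map; rewrite perm_sym.
Qed.
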